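(* Let $\mathcal G$ be a countably infinite set, $k$ an even positive integer and $\pi\in\mathcal B_{k/2}$. Then there exists a $\pi$-adopted sequence $G(\pi)=(G_1,\dots,G_k)\in\mathcal G^k$, and it is unique up to equivalence: any two $\pi$-adopted sequences are equivalent. Moreover $\#\{G_1,\dots,G_k\}=\frac k2+1$.
   Context: A pair-partition of $\{1,\dots,k\}$ is a partition all of whose blocks have exactly two elements; it is crossing if there exist $1\le a<b<c<d\le k$ with $\{a,c\},\{b,d\}\in\pi$, and non-crossing otherwise. For even $k$, $\mathcal B_{k/2}$ denotes the set of non-crossing pair-partitions of $\{1,\dots,k\}$. For $k\ge 4$, $\pi\in\mathcal B_{k/2}$ and a block $\{m,m+1\}\in\pi$ with $1\le m\le k-2$, $\pi\setminus^\bullet\{m,m+1\}\in\mathcal B_{k/2-1}$ denotes the pair-partition of $\{1,\dots,k-2\}$ obtained by deleting the block $\{m,m+1\}$ and relabelling every remaining element $a>m$ as $a-2$. $\pi$-adopted sequences. Let $\mathcal G$ be a countable set and $\pi\in\mathcal B_{k/2}$. A sequence $g=(g_1,\dots,g_k)\in\mathcal G^k$ is $\pi$-adopted, defined recursively in $k$, as follows. For $k=2$ (so $\pi=\{\{1,2\}\}$), $g$ is $\pi$-adopted iff $g_1\neq g_2$. For $k\ge 4$, $g$ is $\pi$-adopted iff for every block of $\pi$ of the form $\{m,m+1\}$ with $1\le m\le k-2$: (a) $g_m=g_{m+2}$ and $g_{m+1}\neq g_s$ for all $s\neq m+1$; and (b) the sequence $(g_1,\dots,g_m,g_{m+3},\dots,g_k)\in\mathcal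 G^{k-2}$, obtained by deleting $g_{m+1}$ and $g_{m+2}$, is $\pi\setminus^\bullet\{m,m+1\}$-adopted. Two sequences $g,h\in\mathcal G^k$ are equivalent if there is a bijection $\sigma:\mathcal G\to\mathcal G$ with $\sigma(g_i)=h_i$ for all $i$. *)

From mathcomp Require Import all_boot.
Set Implicit Arguments. Unset Strict Implicit. Unset Printing Implicit Defensive.

(* A pair-partition of {1,...,k} is represented as a list of blocks; the block
   {a,b} with a < b is stored as the pair (a,b). *)
Definition pairpart := seq (nat * nat).

Definition is_pairpart (k : nat) (pi : pairpart) : Prop :=
  (forall p, p \in pi -> p.1 < p.2) /\
  perm_eq (flatten [seq [:: p.1; p.2] | p <- pi]) (iota 1 k).

Definition crossing (pi : pairpart) : Prop :=
  exists a b c d, [/\ a < b, b < c, c < d, (a, c) \in pi & (b, d) \in pi].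

Definition is_NC_pairpart (k : nat) (pi : pairpart) : Prop :=
  is_pairpart k pi /\ ~ crossing pi.

Definition relab (m a : nat) : nat := if m < a then a - 2 else a.

Definition del_block (pi : pairpart) (m : nat) : pairpart :=
  [seq (relab m p.1, relab m p.2) | p <- pi & p != (m, m.+1)].

(* sequences (g_1,...,g_k) in G^k are represented as functions nat -> G;
   only the values at indices 1..k are relevant. *)
Definition del_seq (G : Type) (g : nat -> G) (m : nat) : nat -> G :=
  fun i => if i <= m then g i else g (i + 2).

Fixpoint adopted_rec (G : Type) (n : nat) (pi : pairpart) (g : nat -> G) : Prop :=
  match n with
  | 0 => True (* k = 0: never used *)
  | 1 => g 1 <> g 2
  | n'.+1 =>
      forall m, 1 <= m -> m <= n.*2 - 2 -> (m, m.+1) \in pi ->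
        (g m = g (m + 2) /\
         (forall s, 1 <= s -> s <= n.*2 -> s <> m.+1 -> g m.+1 <> g s)) /\
        adopted_rec n' (del_block pi m) (del_seq g m)
  end.

Definition adopted (G : Type) (k : nat) (pi : pairpart) (g : nat -> G) : Prop :=
  adopted_rec k./2 pi g.

Definition equiv_seq (G : Type) (k : nat) (g h : nat -> G) : Prop :=
  exists sigma : G -> G, bijective sigma /\
    forall i, 1 <= i -> i <= k -> sigma (g i) = h i.

(* Deleting an adjacent block {m, m+1} of a non-crossing pair-partition of {1..k} leaves a
   non-crossing pair-partition of {1..k-2}, and for k > 2 there is such a block with m <= k-2.
   Deletions at two distinct adjacent blocks commute, so the recursive conditions need only be
   checked at one adjacent block: g is pi-adopted as soon as g_m = g_{m+2}, g_{m+1} is taken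
   nowhere else, and the reduced sequence is adopted for the reduced partition.  Thus adopted
   sequences arise exactly by inserting a fresh value into adopted sequences of the reduced
   partition; by induction on k/2 this gives existence (G is infinite), uniqueness up to a
   bijection of G (built from transpositions), and exactly k/2 + 1 distinct values. *)

From mathcomp Require Import all_boot zify.
Set Implicit Arguments. Unset Strict Implicit. Unset Printing Implicit Defensive.

Ltac case_ifs := repeat match goal with |- context [if ?c then _ else _] =>
  lazymatch c with context [if _ then _ else _] => fail | _ => case: (boolP c) => ? end end.
Ltac relab_lia := rewrite /relab; case_ifs; lia.

Lemma ltn_relab m x y : x != m -> x != m.+1 -> y != m -> y != m.+1 ->
  (relab m x < relab m y) = (x < y).
Proof. by move=> *; apply/idP/idP; relab_lia. Qed.

Lemma relabC m m' x : m.+1 < m' \/ m'.+1 < m ->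
  relab (relab m m') (relab m x) = relab (relab m' m) (relab m' x).
Proof. by relab_lia. Qed.

Definition points (pi : pairpart) : seq nat := flatten [seq [:: p.1; p.2] | p <- pi].

Lemma points_cons p pi : points (p :: pi) = p.1 :: p.2 :: points pi.
Proof. by []. Qed.

Lemma pointsP pi x : reflect (exists2 p, p \in pi & x \in [:: p.1; p.2]) (x \in points pi).
Proof. exact: flatten_mapP. Qed.

Lemma subseq_points_filter (P : pred (nat * nat)) pi :
  subseq (points (filter P pi)) (points pi).
Proof.
elim: pi => //= p pi IH; case: (P p); first by rewrite points_cons /= !eqxx.
exact: subseq_trans IH (subseq_trans (subseq_cons _ p.2) (subseq_cons _ p.1)).
Qed.

Lemma points_block_eq pi p q x : uniq (points pi) -> p \in pi -> q \in pi ->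
  x \in [:: p.1; p.2] -> x \in [:: q.1; q.2] -> p = q.
Proof.
elim: pi => // r pi IH; rewrite points_cons /= => /and3P[r1 r2 u].
have notin_rest s : s \in pi -> x \in [:: r.1; r.2] -> x \notin [:: s.1; s.2].
  move=> si xr; apply: contraL (mem_head x [::]) => xs.
  have {si xs} xpi : x \in points pi by apply/pointsP; exists s.
  move: xr; rewrite !inE => /orP[]/eqP xE; last by rewrite -xE xpi in r2.
  by move: r1; rewrite inE negb_or -xE xpi andbF.
move=> pin qin xp xq; move: pin qin.
rewrite !in_cons => /orP[/eqP pE|pi_p] /orP[/eqP qE|qi]; subst => //.
- by rewrite (negPf (notin_rest q qi xp)) in xq.
- by rewrite (negPf (notin_rest p pi_p xq)) in xp.
- exact: IH.
Qed.

Lemma blocks_disjoint pi p q : uniq (points pi) -> p \in pi -> q \in pi -> p != q ->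
  [/\ p.1 != q.1, p.1 != q.2, p.2 != q.1 & p.2 != q.2].
Proof.
move=> u pin qin pq.
have apart x : x \in [:: p.1; p.2] -> x \notin [:: q.1; q.2].
  by move=> xp; apply: contra pq => xq; rewrite (points_block_eq u pin qin xp xq).
have := apart p.1; have := apart p.2; rewrite !inE !eqxx ?orbT !negb_or.
by move=> /(_ isT) /andP[? ?] /(_ isT) /andP[? ?].
Qed.

Lemma adjacent_blocks_apart pi a m : uniq (points pi) ->
  (a, a.+1) \in pi -> (m, m.+1) \in pi -> a != m -> a.+1 < m \/ m.+1 < a.
Proof.
move=> u ai mi am; have am' : (a, a.+1) != (m, m.+1) by apply: contra_neq am => -[->].
by have [/= ? ? ? ?] := blocks_disjoint u ai mi am'; lia.
Qed.

Lemma pairpart_uniq k pi : is_pairpart k pi -> uniq (points pi).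
Proof. by case=> _ H; rewrite /points (perm_uniq H) iota_uniq. Qed.

Lemma mem_points_pairpart k pi x : is_pairpart k pi -> (x \in points pi) = (1 <= x <= k).
Proof. by case=> _ H; rewrite /points (perm_mem H) mem_iota; apply/idP/idP; lia. Qed.

Lemma points_del_block pi m :
  points (del_block pi m) = map (relab m) (points [seq p <- pi | p != (m, m.+1)]).
Proof.
rewrite /del_block; elim: pi => // p pi IH; rewrite /= ; case: ifP => // _.
by rewrite map_cons !points_cons IH.
Qed.

Lemma mem_points_del_filter pi m x : uniq (points pi) -> (m, m.+1) \in pi ->
  x \in points [seq p <- pi | p != (m, m.+1)] -> [/\ x != m, x != m.+1 & x \in points pi].
Proof.
move=> u mi /pointsP[q]; rewrite mem_filter => /andP[qm qi] xq.
have [/= q1 q2 q3 q4] := blocks_disjoint u qi mi qm.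
split; last by apply/pointsP; exists q.
all: by move: xq; rewrite !inE => /orP[]/eqP->.
Qed.

Lemma del_block_uniq pi m : uniq (points pi) -> (m, m.+1) \in pi ->
  uniq (points (del_block pi m)).
Proof.
move=> u mi; rewrite points_del_block map_inj_in_uniq.
  exact: subseq_uniq (subseq_points_filter _ _) u.
move=> x y /(mem_points_del_filter u mi)[? ? _] /(mem_points_del_filter u mi)[? ? _].
relab_lia.
Qed.

Lemma del_block_adjacent pi m a : uniq (points pi) ->
  (m, m.+1) \in pi -> (a, a.+1) \in pi -> a != m ->
  (relab m a, (relab m a).+1) \in del_block pi m.
Proof.
move=> u mi ai am; have apart := adjacent_blocks_apart u ai mi am.
apply/mapP; exists (a, a.+1); last by rewrite /=; congr pair; relab_lia.
by rewrite mem_filter ai andbT; apply: contra_neq am => -[].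
Qed.

Lemma del_block_del_block pi m m' : del_block (del_block pi m) m' =
  [seq (relab m' (relab m p.1), relab m' (relab m p.2)) | p <- pi &
     (p != (m, m.+1)) && ((relab m p.1, relab m p.2) != (m', m'.+1))].
Proof.
rewrite /del_block filter_map -map_comp -filter_predI.
by congr map; apply: eq_filter => p; rewrite /= andbC.
Qed.

Lemma del_blockC pi m m' : uniq (points pi) ->
  (m, m.+1) \in pi -> (m', m'.+1) \in pi -> m != m' ->
  del_block (del_block pi m) (relab m m') = del_block (del_block pi m') (relab m' m).
Proof.
have kept a b : uniq (points pi) -> (a, a.+1) \in pi -> (b, b.+1) \in pi -> a != b ->
    {in pi, forall p, (p != (a, a.+1)) &&
       ((relab a p.1, relab a p.2) != (relab a b, (relab a b).+1))
     = (p != (a, a.+1)) && (p != (b, b.+1))}.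
  move=> u ai bi ab p pin; have apart := adjacent_blocks_apart u ai bi ab.
  case: (eqVneq p (a, a.+1)) => //= pa; case: (eqVneq p (b, b.+1)) => [->|pb].
    by apply/negbF/eqP; rewrite /=; congr pair; relab_lia.
  have [/= ? ? ? ?] := blocks_disjoint u pin bi pb.
  have [/= ? ? ? ?] := blocks_disjoint u pin ai pa.
  by apply/eqP => -[]; relab_lia.
move=> u mi m'i mm'; rewrite !del_block_del_block.
rewrite (eq_in_filter (kept _ _ u mi m'i mm')).
rewrite (eq_in_filter (kept _ _ u m'i mi _)) 1?eq_sym //.
under [in RHS]eq_filter => p do rewrite andbC.
have apart := adjacent_blocks_apart u mi m'i mm'.
by apply/eq_map => p; congr pair; exact: relabC.
Qed.

Lemma block_range k pi a b : is_pairpart k pi -> (a, b) \in pi ->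
  [/\ 1 <= a, a < b & b <= k].
Proof.
move=> ppi ab; have := ppi.1 _ ab.
have [] : a \in points pi /\ b \in points pi.
  by split; apply/pointsP; exists (a, b); rewrite ?inE ?eqxx ?orbT.
by rewrite !(mem_points_pairpart _ ppi) /= => *; split; lia.
Qed.

Lemma del_block_pairpart k pi m : is_pairpart k pi -> (m, m.+1) \in pi ->
  is_pairpart (k - 2) (del_block pi m).
Proof.
move=> ppi mi; have u := pairpart_uniq ppi.
have mem x : (x \in points pi) = (1 <= x <= k) := mem_points_pairpart x ppi.
have [m1 _ mk] := block_range ppi mi.
split.
  move=> q /mapP[p]; rewrite mem_filter => /andP[pm pin] -> /=.
  have [/= ? ? ? ?] := blocks_disjoint u pin mi pm.
  by rewrite ltn_relab //; exact: ppi.1.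
apply: uniq_perm; rewrite ?iota_uniq ?del_block_uniq // => x.
rewrite -/(points _) points_del_block mem_iota; apply/mapP/idP => [[y yin ->]|xk].
  by have [? ? /[!mem] yk] := mem_points_del_filter u mi yin; relab_lia.
pose y := if x < m then x else x + 2.
have /pointsP[q qin yq] : y \in points pi by rewrite mem /y; relab_lia.
exists y; last by rewrite /y; relab_lia.
apply/pointsP; exists q => //; rewrite mem_filter qin andbT.
by apply: contraTneq yq => ->; rewrite /= !inE /y; relab_lia.
Qed.

Lemma del_block_noncrossing pi m : uniq (points pi) -> (m, m.+1) \in pi ->
  ~ crossing pi -> ~ crossing (del_block pi m).
Proof.
move=> u mi nc [a [b [c [d [ab bc cd]]]]].
case/mapP=> [[a' c']]; rewrite mem_filter => /andP[acm ac'] [Ea Ec].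
case/mapP=> [[b' d']]; rewrite mem_filter => /andP[bdm bd'] [Eb Ed].
subst a b c d.
have [/= ? ? ? ?] := blocks_disjoint u ac' mi acm.
have [/= ? ? ? ?] := blocks_disjoint u bd' mi bdm.
by apply: nc; exists a', b', c', d'; move: ab bc cd; rewrite !ltn_relab.
Qed.

Lemma del_block_NC k pi m : is_NC_pairpart k pi -> (m, m.+1) \in pi ->
  is_NC_pairpart (k - 2) (del_block pi m).
Proof.
move=> [ppi nc] mi; split; first exact: del_block_pairpart.
exact: del_block_noncrossing (pairpart_uniq ppi) mi nc.
Qed.

Lemma NC_adjacent_block_within k pi a b : is_NC_pairpart k pi -> (a, b) \in pi ->
  exists2 m, (m, m.+1) \in pi & a <= m /\ m.+1 <= b.
Proof.
move=> [ppi nc] ab; have u := pairpart_uniq ppi.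
have mem x : (x \in points pi) = (1 <= x <= k) := mem_points_pairpart x ppi.
(* induction on b - a: the block of a + 1 is nested in (a, b) since pi is non-crossing *)
have [w wab] := ubnP (b - a); elim: w a b wab ab => // w IH a b /ltnSE wab ab.
have [a1 alb bk] := block_range ppi ab.
case: (eqVneq b a.+1) => [Eb|ba]; first by subst b; exists a => //; split.
have /pointsP[[c d] cd acd] : a.+1 \in points pi by rewrite mem; lia.
have cdab : (c, d) != (a, b) by apply: contraTneq acd => -[-> ->]; rewrite /= !inE; lia.
have [/= ? ? ? ?] := blocks_disjoint u cd ab cdab.
have [_ cld _] := block_range ppi cd.
move: acd; rewrite /= !inE => /orP[]/eqP Ea; subst.
- case: (ltnP d b) => db.
    by have [m md [am mb]] := IH a.+1 d ltac:(lia) cd; exists m => //; lia.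
  by case: nc; exists a, a.+1, b, d; split => //; lia.
- by case: nc; exists c, a, a.+1, b; split => //; lia.
Qed.

Lemma NC_adjacent_block k pi : 2 < k -> is_NC_pairpart k pi ->
  exists2 m, (m, m.+1) \in pi & 1 <= m /\ m.+2 <= k.
Proof.
move=> k2 NCpi; have [ppi _] := NCpi; have u := pairpart_uniq ppi.
have mem x : (x \in points pi) = (1 <= x <= k) := mem_points_pairpart x ppi.
suff [[a b] ab /= bk] : exists2 p, p \in pi & p.2 < k.
  have [m mi [am mb]] := NC_adjacent_block_within NCpi ab.
  by exists m => //; have [] := block_range ppi mi; lia.
(* the block of 1 or the block of 2 avoids k *)
have /pointsP[[a b] ab /[!inE] /= a1] : 1 \in points pi by rewrite mem; lia.
have /pointsP[[c d] cd /[!inE] /= c2] : 2 \in points pi by rewrite mem; lia.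
have [? ? ?] := block_range ppi ab; have [? ? ?] := block_range ppi cd.
case: (ltnP b k) => kb; first by exists (a, b).
have abcd : (a, b) != (c, d) by apply/eqP => -[Ea Eb]; subst; lia.
have [/= ? ? ? ?] := blocks_disjoint u ab cd abcd.
by exists (c, d) => //=; lia.
Qed.

Section Bijections.

Variable G : eqType.

Lemma fresh_of_inj (f : nat -> G) : injective f -> forall s : seq G, exists z, z \notin s.
Proof.
move=> f_inj s; set fs := [seq f i | i <- iota 0 (size s).+1].
case: (boolP (all (mem s) fs)) => [/allP fs_s | /allPn[z _ zs]]; last by exists z.
have := uniq_leq_size _ fs_s.
by rewrite map_inj_uniq // iota_uniq size_map size_iota ltnn => /(_ isT).
Qed.

Definition swap (a b z : G) := if z == a then b else if z == b then a else z.

Lemma swapK a b : involutive (swap a b).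
Proof.
move=> z; rewrite /swap; case: (eqVneq z a) => [->|za].
  by case: (eqVneq b a) => [->|ba]; rewrite ?eqxx.
case: (eqVneq z b) => [->|zb]; first by rewrite eqxx.
by rewrite (negPf za) (negPf zb).
Qed.

Lemma bij_extend_fresh (S : pred nat) j (g h : nat -> G) (sigma : G -> G) : bijective sigma ->
  {in S, forall i, sigma (g i) = h i} -> {in S, forall i, g i != g j /\ h i != h j} ->
  exists2 tau : G -> G, bijective tau & {in predU S (pred1 j), forall i, tau (g i) = h i}.
Proof.
move=> sigma_bij gh_S neq_S; have sigma_inj := bij_inj sigma_bij.
exists (swap (h j) (sigma (g j)) \o sigma); first exact: bij_comp (inv_bij (swapK _ _)) _.
move=> i /orP[iS | /eqP->] /=; last first.
  by rewrite /swap; case: (eqVneq _ (h j)) => [->|]; rewrite ?eqxx.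
have [gij hij] := neq_S i iS; rewrite (gh_S i iS) /swap (negPf hij) ifN //.
by apply: contra gij => /eqP; rewrite -(gh_S i iS) => /sigma_inj->.
Qed.

End Bijections.

Section AdoptedSequences.

Variable G : Type.
Implicit Types (g h : nat -> G) (pi : pairpart).

Definition adopted_at k g m :=
  g m = g (m + 2) /\ (forall s, 1 <= s -> s <= k -> s <> m.+1 -> g m.+1 <> g s).

Lemma adopted_recSS n pi g : adopted_rec n.+2 pi g =
  forall m, 1 <= m -> m <= n.+2.*2 - 2 -> (m, m.+1) \in pi ->
    adopted_at n.+2.*2 g m /\ adopted_rec n.+1 (del_block pi m) (del_seq g m).
Proof. by []. Qed.

Lemma eq_del_seq g h m : g =1 h -> del_seq g m =1 del_seq h m.
Proof. by move=> gh i; rewrite /del_seq; case: ifP. Qed.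

Lemma eq_adopted_rec n pi g h : g =1 h -> adopted_rec n pi g -> adopted_rec n pi h.
Proof.
elim: n pi g h => [|[|n] IH] pi g h gh //=; first by rewrite -!gh.
move=> Hg m m1 mk mi; have [[gm gu] Hd] := Hg m m1 mk mi.
split; last exact: IH (eq_del_seq m gh) Hd.
by split=> [|s *]; rewrite -!gh //; exact: gu.
Qed.

Lemma del_seq_relab g (m i : nat) : g m = g (m + 2) -> i != m.+1 ->
  del_seq g m (relab m i) = g i.
Proof.
move=> gm im; rewrite /del_seq /relab; case_ifs; try by congr g; lia.
have -> : i = m + 2 by lia.
by rewrite addnK.
Qed.

Lemma del_seqC g m m' : m.+1 < m' \/ m'.+1 < m ->
  del_seq (del_seq g m) (relab m m') =1 del_seq (del_seq g m') (relab m' m).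
Proof. by move=> apart i; rewrite /del_seq /relab; case_ifs; congr g; lia. Qed.

Lemma adopted_at_del_seq k g m0 m : 1 <= m0 -> 1 <= m ->
  m0 <= k -> m <= k -> m.+1 < m0 \/ m0.+1 < m ->
  adopted_at k.+2 g m0 -> adopted_at k.+2 g m -> adopted_at k (del_seq g m) (relab m m0).
Proof.
move=> m01 m1 m0k mk apart [E0 U0] [Em Um].
have fwd (x : nat) : x != m.+1 -> del_seq g m (relab m x) = g x := del_seq_relab Em.
have r1 : (relab m m0).+1 = relab m m0.+1 by relab_lia.
have r2 : relab m m0 + 2 = relab m (m0 + 2) by relab_lia.
split; first by rewrite r2 !fwd //; lia.
move=> s s1 sk; rewrite r1 fwd; last by lia.
rewrite /del_seq; case: ifP => hs sm; apply: U0; move: sm; relab_lia.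
Qed.

Lemma adopted_at_of_del_seq k g m0 m : 1 <= m0 -> 1 <= m ->
  m0 <= k -> m <= k -> m.+1 < m0 \/ m0.+1 < m ->
  adopted_at k.+2 g m0 -> adopted_at k (del_seq g m0) (relab m0 m) -> adopted_at k.+2 g m.
Proof.
move=> m01 m1 m0k mk apart [E0 U0] [E1 U1].
have back (x : nat) : x != m0.+1 -> g x = del_seq g m0 (relab m0 x).
  by move=> x_m0; rewrite del_seq_relab.
have r1 : relab m0 m.+1 = (relab m0 m).+1 by relab_lia.
have r2 : relab m0 (m + 2) = relab m0 m + 2 by relab_lia.
split; first by rewrite (back m) ?(back (m + 2)) ?r2 //; lia.
move=> s s1 sk sm; case: (eqVneq s m0.+1) => [->|s_m0].
  by move/esym; apply: U0; lia.
by rewrite (back m.+1) ?(back s) ?r1 //; [apply: U1; relab_lia | lia].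
Qed.

Lemma adopted_rec_from_block n pi g m0 : uniq (points pi) ->
  1 <= m0 -> m0 <= n.+2.*2 - 2 -> (m0, m0.+1) \in pi ->
  adopted_at n.+2.*2 g m0 -> adopted_rec n.+1 (del_block pi m0) (del_seq g m0) ->
  adopted_rec n.+2 pi g.
Proof.
elim: n pi g m0 => [|n IH] pi g m0 u m01 m0k m0i A0 Hdel m m1 mk mi;
  (case: (eqVneq m m0) => [-> | mm0]; first by split);
  have apart := adjacent_blocks_apart u mi m0i mm0; first by lia.
have m0m : m0 != m by rewrite eq_sym.
rewrite adopted_recSS in Hdel.
(* {m, m+1} survives in the reduction at m0, and the two reductions commute *)
have [Am' Hdel'] := Hdel (relab m0 m) ltac:(relab_lia) ltac:(relab_lia)
  (del_block_adjacent u m0i mi mm0).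
have Am : adopted_at n.+3.*2 g m.
  by apply: (adopted_at_of_del_seq (k := n.+2.*2) _ _ _ _ _ A0 Am'); lia.
split => //; apply: (IH _ _ (relab m m0) (del_block_uniq u mi)); try relab_lia.
- exact: del_block_adjacent.
- by apply: (adopted_at_del_seq (k := n.+2.*2) _ _ _ _ _ A0 Am); lia.
- rewrite del_blockC //.
  by apply: eq_adopted_rec Hdel' => i; apply: del_seqC; lia.
Qed.

End AdoptedSequences.

Section AdoptedValues.

Variable G : eqType.
Implicit Types (g h : nat -> G).

(* [relab m] sends both m and m + 2 to m, so [h m] is repeated around the new value z. *)
Definition ins_seq h m (z : G) : nat -> G :=
  fun i => if i == m.+1 then z else h (relab m i).

Lemma del_seq_ins h m z : del_seq (ins_seq h m z) m =1 h.
Proof.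
move=> i; rewrite /del_seq /ins_seq; case_ifs; first [lia | congr h; relab_lia].
Qed.

Lemma ins_seq_adopted_at k h m z : 1 <= m <= k -> z \notin [seq h i | i <- iota 1 k] ->
  adopted_at k.+2 (ins_seq h m z) m.
Proof.
move=> mk zh; rewrite /adopted_at /ins_seq; split.
  by case_ifs; try lia; congr h; relab_lia.
move=> s s1 sk sm; rewrite eqxx ifN_eq; last by apply/eqP.
by apply: contraNnot zh => ->; apply: map_f; rewrite mem_iota; relab_lia.
Qed.

Lemma adopted_rec_exists (f : nat -> G) : injective f ->
  forall n pi, uniq (points pi) -> exists g : nat -> G, adopted_rec n.+1 pi g.
Proof.
move=> f_inj; elim=> [|n IH] pi u; first by exists f => /= /f_inj.
case: (boolP (has (fun m => (m, m.+1) \in pi) (iota 1 (n.+2.*2 - 2)))).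
  case/hasP=> m0; rewrite mem_iota => m0k m0i.
  have [h Hh] := IH _ (del_block_uniq u m0i).
  have [z zh] := fresh_of_inj f_inj [seq h i | i <- iota 1 n.+1.*2].
  exists (ins_seq h m0 z); apply: (adopted_rec_from_block u _ _ m0i); try lia.
    by apply: ins_seq_adopted_at zh; lia.
  by apply: eq_adopted_rec Hh => i; rewrite del_seq_ins.
(* no block {m, m+1} with m <= k - 2: the defining condition is vacuous *)
move/hasPn=> no_adj; exists f; rewrite adopted_recSS => m m1 mk mi; exfalso.
suff /no_adj : m \in iota 1 (n.+2.*2 - 2) by rewrite mi.
by rewrite mem_iota; lia.
Qed.

Lemma values_del_seq k g m : 1 <= m <= k -> g m = g (m + 2) ->
  [seq g i | i <- iota 1 k.+2] =i g m.+1 :: [seq del_seq g m i | i <- iota 1 k].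
Proof.
move=> mk gm x; rewrite inE; apply/mapP/orP => [[i] | [/eqP-> | /mapP[i]]].
- rewrite mem_iota => ik ->; case: (eqVneq i m.+1) => [->|im]; [left | right] => //.
  apply/mapP; exists (relab m i); last by rewrite del_seq_relab.
  by rewrite mem_iota; relab_lia.
- by exists m.+1; rewrite // mem_iota; lia.
- rewrite mem_iota /del_seq => ik ->.
  by case: ifP => im; [exists i | exists (i + 2)]; rewrite // mem_iota; lia.
Qed.

Lemma adopted_rec_card n pi g : is_NC_pairpart n.+1.*2 pi -> adopted_rec n.+1 pi g ->
  size (undup [seq g i | i <- iota 1 n.+1.*2]) = n.+2.
Proof.
elim: n pi g => [|n IH] pi g NCpi; first by move=> /= g12; rewrite inE; case: eqP.
have [m0 m0i [m01 m0k]] := NC_adjacent_block (ltac:(lia) : 2 < n.+2.*2) NCpi.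
rewrite adopted_recSS => /(_ m0 m01 ltac:(lia) m0i) [[E0 U0] Hdel].
rewrite (perm_size (perm_undup (values_del_seq (k := n.+1.*2) _ E0))); last by lia.
have size_undup_cons (x : G) s : x \notin s -> size (undup (x :: s)) = (size (undup s)).+1.
  by move=> /= /negPf->.
rewrite size_undup_cons.
  by rewrite (IH (del_block pi m0)) //; exact: del_block_NC NCpi m0i.
by apply/mapP => -[i]; rewrite mem_iota /del_seq => ik; case: ifP => hi; apply: U0; lia.
Qed.

Lemma adopted_rec_equiv n pi g h : is_NC_pairpart n.+1.*2 pi ->
  adopted_rec n.+1 pi g -> adopted_rec n.+1 pi h -> equiv_seq n.+1.*2 g h.
Proof.
elim: n pi g h => [|n IH] pi g h NCpi.
  move=> /= /eqP g12 /eqP h12.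
  have [tau1 tau1_bij tau1_gh] : exists2 tau : G -> G, bijective tau &
      {in predU pred0 (pred1 1), forall i, tau (g i) = h i}.
    by apply: (bij_extend_fresh (sigma := id)) => //; exact: inv_bij.
  have [|tau tau_bij tau_gh] := bij_extend_fresh (j := 2) tau1_bij tau1_gh.
    by move=> i; rewrite !inE /= => /eqP->; split.
  by exists tau; split => // i i1 i2; apply: tau_gh; rewrite !inE; lia.
have [m0 m0i [m01 m0k]] := NC_adjacent_block (ltac:(lia) : 2 < n.+2.*2) NCpi.
have m0k' : m0 <= n.+2.*2 - 2 by lia.
rewrite adopted_recSS => /(_ m0 m01 m0k' m0i) [[Eg Ug] Hg].
rewrite adopted_recSS => /(_ m0 m01 m0k' m0i) [[Eh Uh] Hh].
have [sigma [sigma_bij sigma_gh]] := IH _ _ _ (del_block_NC NCpi m0i) Hg Hh.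
pose S := [pred i | (1 <= i <= n.+2.*2) && (i != m0.+1)].
have [||tau tau_bij tau_gh] := bij_extend_fresh (S := S) (j := m0.+1) (g := g) (h := h) sigma_bij.
- move=> i /andP[ik im]; rewrite -(del_seq_relab Eg im) -(del_seq_relab Eh im).
  by apply: sigma_gh; relab_lia.
- by move=> i /andP[ik im]; split; apply/eqP => /esym; [apply: Ug | apply: Uh]; lia.
- by exists tau; split => // i i1 ik; apply: tau_gh; rewrite !inE; lia.
Qed.

End AdoptedValues.

Theorem mainTheorem3 (G : eqType) (HG : exists f : nat -> G, bijective f)
  (k : nat) (pi : pairpart) (Hk : 0 < k) (Hev : ~~ odd k)
  (Hpi : is_NC_pairpart k pi) :
  (exists g : nat -> G, adopted k pi g) /\
  (forall g h : nat -> G, adopted k pi g -> adopted k pi h -> equiv_seq k g h) /\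
  (forall g : nat -> G, adopted k pi g ->
     size (undup [seq g i | i <- iota 1 k]) = k./2.+1).
Proof.
have [f f_bij] := HG.
have [n Ek] : exists n, k = n.+1.*2.
  have := odd_double_half k; rewrite (negPf Hev) add0n => Ek.
  by exists k./2.-1; rewrite prednK // -Ek; lia.
move: Hpi; rewrite /adopted Ek doubleK => Hpi; split; [|split].
- exact: adopted_rec_exists (bij_inj f_bij) n pi (pairpart_uniq Hpi.1).
- by move=> g h; exact: adopted_rec_equiv.
- by move=> g; exact: adopted_rec_card.
Qed.
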